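(* Let $l,t,s,x,n$ be integers with $2\leq l\leq t$, $s\geq l+1$, $n\geq 2s+1$, $s\geq x\geq l$ and $n\geq x+(t-1)\binom{x}{l}+2(s-x)+1$. Let $X$ be a $K_{1,l}$-free graph on $x$ vertices with $e(X)=ex(x,K_{1,l})$, and let $S$ be a $K_{l,t}$-free graph on $2(s-x)+1$ vertices with $e(S)=ex(2(s-x)+1,K_{l,t})$, with $V(X)\cap V(S)=\emptyset$. Build a graph $G$ as follows: start from the disjoint union of $X$ and $S$; for each $l$-subset $F\subseteq V(X)$ add $t-1$ new vertices $v_{F,1},\ldots,v_{F,t-1}$, each joined to every vertex of $F$; fix an $(l-1)$-subset $F_0\subseteq V(X)$; add a set $U$ of $n-x-(t-1)\binom{x}{l}-2(s-x)-1$ new vertices, each joined to every vertex of $F_0$; and join every vertex of $S$ to every vertex of $F_0$. Call the resulting $n$-vertex graph $G_1^x$; and let $G_2^x$ be the graph obtained from $G_1^x$ by deleting all edges between $V(S)$ and $V(X)$. (i) If $2(s-x)+1\leq t$, then $G_1^x$ is $\{K_{l,t},M_{s+1}\}$-free. (ii) If $2(s-x)+1\geq t+1$, then $G_2^x$ is $\{K_{l,t},M_{s+1}\}$-free.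
   Context: All graphs are finite and simple. A graph is $\mathscr{F}$-free if it contains no member of $\mathscr{F}$ as a subgraph; $ex(m,F)$ is the maximum number of edges of an $m$-vertex $F$-free graph. $K_{a,b}$ is the complete bipartite graph with parts of sizes $a,b$; $M_{s+1}$ is the matching of $s+1$ pairwise disjoint edges. *)

From mathcomp Require Import all_boot.
Set Implicit Arguments. Unset Strict Implicit. Unset Printing Implicit Defensive.

Definition simple_graph (T : finType) (e : rel T) : bool :=
  [forall u, ~~ e u u] && [forall u, forall v, e u v == e v u].

Definition edge_set (T : finType) (e : rel T) : {set {set T}} :=
  [set E : {set T} | [exists u, exists v, [&& u != v, e u v & E == [set u; v]]]].

Definition nedges (T : finType) (e : rel T) : nat := #|edge_set e|.

Definition contains_K (T : finType) (e : rel T) (a b : nat) : bool :=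
  [exists A : {set T}, exists B : {set T},
    [&& #|A| == a, #|B| == b, [disjoint A & B] &
        [forall u in A, forall v in B, e u v]]].

Definition contains_M (T : finType) (e : rel T) (k : nat) : bool :=
  [exists M : {set T * T},
    [&& #|M| == k, [forall p in M, e p.1 p.2] &
        [forall p in M, forall q in M,
           (p != q) ==> [disjoint [set p.1; p.2] & [set q.1; q.2]]]]].

Definition grel (m : nat) (g : {ffun 'I_m * 'I_m -> bool}) : rel 'I_m :=
  fun u v => g (u, v).

Definition exK (m a b : nat) : nat :=
  \max_(g : {ffun 'I_m * 'I_m -> bool} |
          simple_graph (grel g) && ~~ contains_K (grel g) a b) nedges (grel g).

(* The vertex type of G_1^x / G_2^x:
   V(X) = 'I_x, V(S) = 'I_m, vertices v_{F,i} for F an l-subset of V(X), i < t-1,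
   and U = 'I_u. *)
Definition hubT (x l t : nat) :=
  {p : {set 'I_x} * 'I_(t - 1) | #|p.1| == l}.

Definition Vtx (x m l t u : nat) :=
  (('I_x + 'I_m) + (hubT x l t + 'I_u))%type.

(* Edge relation; joinXS = true gives G_1^x, joinXS = false gives G_2^x. *)
Definition Gx (x m l t u : nat) (X : rel 'I_x) (S : rel 'I_m) (F0 : {set 'I_x})
  (joinXS : bool) : rel (Vtx x m l t u) :=
  fun a b =>
    match a, b with
    | inl (inl i), inl (inl j) => X i j
    | inl (inr i), inl (inr j) => S i j
    | inl (inl i), inl (inr _) => joinXS && (i \in F0)
    | inl (inr _), inl (inl i) => joinXS && (i \in F0)
    | inl (inl i), inr (inl h) => i \in (val h).1
    | inr (inl h), inl (inl i) => i \in (val h).1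
    | inl (inl i), inr (inr _) => i \in F0
    | inr (inr _), inl (inl i) => i \in F0
    | _, _ => false
    end.

From mathcomp Require Import all_boot zify.

Set Implicit Arguments. Unset Strict Implicit. Unset Printing Implicit Defensive.

(* Every edge meets V(X) or lies inside S, so a matching has at most
   |X| + floor(|S|/2) <= s edges.  A copy of K_{l,t} meeting S lies inside S and
   F_0, which contains every outside neighbour of S and has only l - 1 < t
   vertices; in G_1^x these are at most t + l - 1 vertices, and in G_2^x the copy
   lies in S itself.  A copy avoiding S lives on X and the new vertices, whose
   neighbours all lie in X; as X has maximum degree < l, one side is contained in
   X and the other consists of hubs v_{F,i} with the same l-set F, of which there
   are only t - 1. *)

Section Generic.
Variable T : finType.
Implicit Types (e : rel T) (A B N W : {set T}) (M : {set T * T}).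

Lemma simple_graphP e : simple_graph e -> irreflexive e /\ symmetric e.
Proof.
case/andP=> /forallP irr /forallP sym; split=> [v | v w]; first exact/negbTE.
exact/eqP/(forallP (sym v)).
Qed.

Lemma contains_KP e a b :
  reflect (exists A B, [/\ #|A| = a, #|B| = b, [disjoint A & B]
                         & {in A & B, forall v w, e v w}])
          (contains_K e a b).
Proof.
apply: (iffP existsP) => [[A /existsP [B /and4P [/eqP cA /eqP cB dAB eAB]]] | ].
  by exists A, B; split=> // v w vA wB; exact: (forall_inP (forall_inP eAB v vA) w wB).
case=> A [B [cA cB dAB eAB]]; exists A; apply/existsP; exists B.
rewrite cA cB !eqxx dAB /=; apply/forall_inP=> v vA; apply/forall_inP=> w wB.
exact: eAB.
Qed.

Lemma K1_free_nbrs_lt e l v N :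
  irreflexive e -> ~~ contains_K e 1 l -> {in N, forall w, e v w} -> #|N| < l.
Proof.
move=> irr K1free vN; rewrite ltnNge; apply: contraNN K1free => /card_geqP [s [us ss sN]].
apply/contains_KP; exists [set v], [set w in s]; split.
- exact: cards1.
- by rewrite cardsE (card_uniqP us).
- by rewrite disjoints1 inE; apply: contraFN (irr v) => /sN /vN.
- by move=> _ w /set1P -> ; rewrite inE => /sN /vN.
Qed.

Definition matching M :=
  {in M &, forall p q, p != q -> [disjoint [set p.1; p.2] & [set q.1; q.2]]}.

Lemma contains_MP e k :
  reflect (exists2 M, matching M & #|M| = k /\ {in M, forall p, e p.1 p.2})
          (contains_M e k).
Proof.
apply: (iffP existsP) => [[M /and3P [/eqP cM /forall_inP eM /forall_inP dM]] | ].
  by exists M => // p q pM qM; apply/implyP; exact: (forall_inP (dM p pM) q qM).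
case=> M dM [cM eM]; exists M; rewrite cM eqxx /=; apply/andP; split.
  exact/forall_inP.
by apply/forall_inP=> p pM; apply/forall_inP=> q qM; apply/implyP; exact: dM.
Qed.

Section Matching.
Variable M : {set T * T}.
Hypothesis matchM : matching M.

Lemma matching_share v p q :
  p \in M -> q \in M -> v \in [set p.1; p.2] -> v \in [set q.1; q.2] -> p = q.
Proof.
move=> pM qM vp vq; apply/eqP; apply: contraTT vq => /(matchM pM qM).
by move/disjointFr/(_ vp)/negbT.
Qed.

Lemma card_matching_meet W :
  #|[set p in M | (p.1 \in W) || (p.2 \in W)]| <= #|W|.
Proof.
set MW := [set p in M | _].
pose end_in p := if p.1 \in W then p.1 else p.2.
have end_inE p : end_in p \in [set p.1; p.2].
  by rewrite /end_in !inE; case: ifP; rewrite eqxx ?orbT.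
rewrite -(@card_in_imset _ _ end_in); last first.
  move=> p q; rewrite !inE => /andP [pM _] /andP [qM _] epq.
  by apply: (matching_share pM qM (end_inE p)); rewrite epq.
apply/subset_leq_card/subsetP => w /imsetP [p]; rewrite inE => /andP [_ pW] ->.
by rewrite /end_in; case: ifPn => // /negbTE p1W; rewrite p1W in pW.
Qed.

Lemma card_matching_inside W :
  {in M, forall p, p.1 != p.2} ->
  #|[set p in M | (p.1 \in W) && (p.2 \in W)]|.*2 <= #|W|.
Proof.
move=> noloop; set MW := [set p in M | _].
have MW_M p : p \in MW -> p \in M by rewrite inE => /andP [].
have share p q v : p \in MW -> q \in MW -> v \in [set p.1; p.2] -> v \in [set q.1; q.2] -> p = q.
  by move=> /MW_M pM /MW_M qM; exact: matching_share.
have inj1 : {in MW &, injective (fun p : T * T => p.1)}.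
  by move=> p q pMW qMW e1; apply: (share p q p.1 pMW qMW); rewrite ?e1 !inE eqxx.
have inj2 : {in MW &, injective (fun p : T * T => p.2)}.
  by move=> p q pMW qMW e2; apply: (share p q p.2 pMW qMW); rewrite ?e2 !inE eqxx ?orbT.
set P1 := [set p.1 | p in MW]; set P2 := [set p.2 | p in MW].
have disj : [disjoint P1 & P2].
  apply/pred0P => v /=; apply/negbTE/andP => -[/imsetP [p pMW ->] /imsetP [q qMW e12]].
  have pq : p = q by apply: (share p q p.1 pMW qMW); rewrite ?e12 !inE eqxx ?orbT.
  by move: (noloop p (MW_M _ pMW)); rewrite e12 pq eqxx.
have cardP12 : #|P1 :|: P2| = #|P1| + #|P2|.
  by rewrite cardsU (disjoint_setI0 disj) cards0 subn0.
rewrite -addnn -{1}(card_in_imset inj1) -(card_in_imset inj2) -cardP12.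
apply/subset_leq_card/subsetP => w /setUP [] /imsetP [p];
  by rewrite inE => /andP [_ /andP [p1W p2W]] ->.
Qed.

End Matching.

End Generic.

Lemma card_preimset_codom (aT rT : finType) (f : aT -> rT) (A : {set rT}) :
  injective f -> {subset A <= codom f} -> #|f @^-1: A| = #|A|.
Proof.
move=> injf Af; have imA : f @: (f @^-1: A) = A.
  apply/setP => w; apply/imsetP/idP => [[v] | wA]; first by rewrite inE => ? ->.
  have /codomP [v fv] := Af w wA.
  by exists v; rewrite ?inE -?fv.
by rewrite -{2}imA card_imset.
Qed.

Lemma contains_K_pullback (aT rT : finType) (f : aT -> rT) (e' : rel aT) (e : rel rT)
    (A B : {set rT}) :
  injective f -> (forall v w, e (f v) (f w) = e' v w) -> {subset A :|: B <= codom f} ->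
  [disjoint A & B] -> {in A & B, forall v w, e v w} -> contains_K e' #|A| #|B|.
Proof.
move=> injf fe sABf dAB eAB; apply/contains_KP; exists (f @^-1: A), (f @^-1: B); split.
- by apply: card_preimset_codom => // v vA; apply: sABf; rewrite inE vA.
- by apply: card_preimset_codom => // v vB; apply: sABf; rewrite inE vB orbT.
- by rewrite -setI_eq0 -preimsetI (disjoint_setI0 dAB) preimset0.
- by move=> v w; rewrite !inE -fe; exact: eAB.
Qed.

Section Construction.
Variables (x m l t u : nat) (X : rel 'I_x) (S : rel 'I_m) (F0 : {set 'I_x}) (joinXS : bool).
Hypotheses (X_irr : irreflexive X) (X_sym : symmetric X).
Hypotheses (S_irr : irreflexive S) (S_sym : symmetric S).

Local Notation V := (Vtx x m l t u).
Local Notation e := (Gx (u := u) (l := l) (t := t) X S F0 joinXS).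

Definition vX (i : 'I_x) : V := inl (inl i).
Definition vS (i : 'I_m) : V := inl (inr i).
Definition isX (v : V) := if v is inl (inl _) then true else false.
Definition isS (v : V) := if v is inl (inr _) then true else false.
Definition isNew (v : V) := if v is inr _ then true else false.
Definition inF0 (v : V) := if v is inl (inl i) then i \in F0 else false.

Lemma vX_inj : injective vX. Proof. by move=> i k []. Qed.
Lemma vS_inj : injective vS. Proof. by move=> i k []. Qed.

Lemma isX_codom v : isX v -> v \in codom vX.
Proof. by case: v => [[i|]|] // _; exact: codom_f. Qed.

Lemma isS_codom v : isS v -> v \in codom vS.
Proof. by case: v => [[|i]|] // _; exact: codom_f. Qed.

Lemma isNewE v : isNew v = ~~ isX v && ~~ isS v.
Proof. by case: v => [[i|i]|i]. Qed.

Lemma card_isX : #|[set v : V | isX v]| = x.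
Proof.
rewrite -[RHS]card_ord -cardsT -(card_preimset_codom vX_inj).
  by apply: eq_card => i; rewrite !inE.
by move=> v; rewrite inE; exact: isX_codom.
Qed.

Lemma card_isS : #|[set v : V | isS v]| = m.
Proof.
rewrite -[RHS]card_ord -cardsT -(card_preimset_codom vS_inj).
  by apply: eq_card => i; rewrite !inE.
by move=> v; rewrite inE; exact: isS_codom.
Qed.

Lemma card_inF0 (Y : {set V}) : {in Y, forall y, inF0 y} -> #|Y| <= #|F0|.
Proof.
move=> YF0; apply: leq_trans (leq_imset_card vX F0); apply/subset_leq_card/subsetP.
by case=> [[i|s]|v] /YF0; rewrite //= => iF0; exact: imset_f.
Qed.

Lemma Gx_sym : symmetric e.
Proof. by case=> [[a|a]|[a|a]] [[b|b]|[b|b]] //=; rewrite ?X_sym ?S_sym. Qed.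

Lemma Gx_irr : irreflexive e.
Proof. by case=> [[a|a]|[a|a]] //=; rewrite ?X_irr ?S_irr. Qed.

Lemma new_adj a b : isNew a -> e a b -> isX b.
Proof. by case: a => [[i|i]|[h|w]] // _; case: b => [[k|k]|[k|k]]. Qed.

Lemma S_adj a b : isS a -> e a b -> isS b || joinXS && inF0 b.
Proof. by case: a => [[|a]|] // _; case: b => [[b|b]|]. Qed.

Lemma adj_XS a b : e a b -> [|| isX a, isX b | isS a && isS b].
Proof. by case: a b => [[a|a]|[a|a]] [[b|b]|[b|b]]. Qed.

Lemma Gx_M_free k : x + m./2 < k -> ~~ contains_M e k.
Proof.
move=> ltk; apply/contains_MP => -[M matchM [cM eM]].
set WX := [set v : V | isX v]; set WS := [set v : V | isS v].
have noloop : {in M, forall p, p.1 != p.2}.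
  by move=> p /eM; apply: contraTneq => ->; rewrite Gx_irr.
have cover : M \subset [set p in M | (p.1 \in WX) || (p.2 \in WX)]
                       :|: [set p in M | (p.1 \in WS) && (p.2 \in WS)].
  by apply/subsetP => p pM; rewrite !inE pM -orbA; exact: adj_XS (eM p pM).
have := card_matching_meet matchM WX; have := card_matching_inside matchM WS noloop.
have := subset_leq_card cover; rewrite cardsU card_isX card_isS cM; lia.
Qed.

Lemma card_preimset_vX (Y : {set V}) : {in Y, forall y, isX y} -> #|vX @^-1: Y| = #|Y|.
Proof. by move=> YX; apply: card_preimset_codom vX_inj _ => y /YX; exact: isX_codom. Qed.

Hypotheses (X_K1_free : ~~ contains_K X 1 l) (F0_lt : #|F0| < l).

Lemma X_nbrs_lt v (Y : {set V}) :
  isX v -> {in Y, forall y, isX y} -> {in Y, forall y, e v y} -> #|Y| < l.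
Proof.
case: v => [[i|]|] // _ /card_preimset_vX <- vY.
by apply: K1_free_nbrs_lt X_irr X_K1_free _ => k; rewrite inE; exact: vY.
Qed.

Lemma new_nbrs_hub z (Y : {set V}) :
  isNew z -> {in Y, forall y, isX y} -> l <= #|Y| -> {in Y, forall y, e z y} ->
  exists2 h : hubT x l t, z = inr (inl h) & (val h).1 = vX @^-1: Y.
Proof.
move=> + YX; rewrite -(card_preimset_vX YX) => + lY.
case: z => [[]|[h|w]] // _ zY.
  exists h => //; apply/eqP; rewrite eq_sym eqEcard (eqP (valP h)) lY andbT.
  by apply/subsetP => i; rewrite inE; exact: zY.
have /card_inF0 : {in Y, forall y, inF0 y} by move=> y /zY; case: y => [[]|].
by rewrite -(card_preimset_vX YX); lia.
Qed.

Lemma new_common_nbrs (Y Z : {set V}) :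
  {in Y, forall y, isX y} -> l <= #|Y| -> {in Z, forall y, isNew y} ->
  {in Z & Y, forall z y, e z y} -> 0 < #|Z| -> #|Y| = l /\ #|Z| < t.
Proof.
move=> YX lY Znew ZY /card_gt0P [z0 z0Z].
have hubZ z : z \in Z -> exists2 h : hubT x l t, z = inr (inl h) & (val h).1 = vX @^-1: Y.
  by move=> zZ; apply: new_nbrs_hub (Znew z zZ) YX lY (ZY z ^~ zZ).
have [h0 _ h0Y] := hubZ z0 z0Z.
split; first by rewrite -(card_preimset_vX YX) -h0Y (eqP (valP h0)).
pose H := [set h : hubT x l t | (val h).1 == vX @^-1: Y].
have cardH : #|H| <= t - 1.
  rewrite -(@card_in_imset _ _ (fun h : hubT x l t => (val h).2)).
    by apply: leq_trans (max_card _) _; rewrite card_ord.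
  move=> h1 h2; rewrite !inE => /eqP E1 /eqP E2 E; apply: val_inj.
  by move: E1 E2 E; case: (val h1) (val h2) => [F1 i1] [F2 i2] /= -> -> ->.
have cardZ : #|Z| <= #|H|.
  apply: leq_trans (leq_imset_card (fun h => inr (inl h) : V) H).
  apply/subset_leq_card/subsetP => z zZ.
  by have [h -> hY] := hubZ z zZ; apply: imset_f; rewrite inE hY.
(* t - 1 is truncated: the index of h0 in 'I_(t - 1) shows it is positive. *)
have := ltn_ord (val h0).2; lia.
Qed.

Lemma complete_pair_avoiding_S (A B : {set V}) :
  {in A & B, forall a b, e a b} -> {in A :|: B, forall v, ~~ isS v} ->
  l <= #|A| -> l <= #|B| -> #|A| + #|B| < l + t.
Proof.
wlog [b bB bnew] : A B / exists2 b, b \in B & isNew b.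
  move=> wlog eAB nS lA lB.
  have [/exists_inP [b bB bnew] | /exists_inPn Bold] := boolP [exists b in B, isNew b].
    by apply: wlog => //; exists b.
  have [/exists_inP [a aA anew] | /exists_inPn Aold] := boolP [exists a in A, isNew a].
    rewrite addnC; apply: wlog => //; first by exists a.
      by move=> b' a' b'B a'A; rewrite Gx_sym; exact: eAB.
    by rewrite setUC.
  have /card_gt0P [a aA] : 0 < #|A| by lia.
  have inX v : v \in A :|: B -> ~~ isNew v -> isX v.
    by move=> vAB; rewrite isNewE nS // andbT negbK.
  have aX : isX a by apply: inX (Aold a aA); rewrite inE aA.
  have BX : {in B, forall y, isX y}.
    by move=> v vB; apply: inX (Bold v vB); rewrite inE vB orbT.
  by have := X_nbrs_lt aX BX (eAB a ^~ aA); rewrite ltnNge lB.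
move=> eAB nS lA lB.
have eBA : {in B & A, forall b a, e b a}.
  by move=> b' a' b'B a'A; rewrite Gx_sym; exact: eAB.
have AX : {in A, forall y, isX y}.
  by move=> a aA; exact: new_adj bnew (eBA b a bB aA).
have Bnew : {in B, forall y, isNew y}.
  move=> b' b'B; rewrite isNewE nS ?inE ?b'B ?orbT // andbT.
  by apply: contraTN lA => b'X; rewrite -ltnNge; exact: X_nbrs_lt b'X AX (eBA b' ^~ b'B).
have [|-> ltB] := new_common_nbrs AX lA Bnew eBA; last by lia.
by apply/card_gt0P; exists b.
Qed.

Lemma complete_pair_meeting_S (A B : {set V}) :
  {in A & B, forall a b, e a b} -> #|F0| < #|A| -> #|F0| < #|B| ->
  (exists2 v, v \in A :|: B & isS v) ->
  {in A :|: B, forall v, isS v || joinXS && inF0 v}.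
Proof.
have S_side (A' B' : {set V}) : {in A' & B', forall a b, e a b} -> #|F0| < #|B'| ->
    (exists2 a, a \in A' & isS a) ->
    {in B', forall v, isS v || joinXS && inF0 v} /\ exists2 b, b \in B' & isS b.
  move=> eAB ltB [a aA Sa].
  have SB : {in B', forall v, isS v || joinXS && inF0 v}.
    by move=> b bB; exact: S_adj Sa (eAB a b aA bB).
  split=> //; apply/exists_inP; apply: contraTT ltB => /exists_inPn noS; rewrite -leqNgt.
  by apply: card_inF0 => b bB; have := SB b bB; rewrite (negbTE (noS b bB)) => /andP [].
move=> eAB ltA ltB [v]; rewrite inE => vAB Sv.
have eBA : {in B & A, forall b a, e b a} by move=> b a bB aA; rewrite Gx_sym; exact: eAB.
pose SF y := isS y || joinXS && inF0 y.
have [SA SB] : {in A, forall y, SF y} /\ {in B, forall y, SF y}.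
  case/orP: vAB => [vA | vB].
    have [SB bS] := S_side A B eAB ltB (ex_intro2 _ _ v vA Sv).
    by have [SA _] := S_side B A eBA ltA bS.
  have [SA aS] := S_side B A eBA ltA (ex_intro2 _ _ v vB Sv).
  by have [SB _] := S_side A B eAB ltB aS.
by move=> w; rewrite inE => /orP [/SA | /SB].
Qed.

Lemma card_S_or_F0 (Y : {set V}) :
  {in Y, forall y, isS y || inF0 y} -> #|Y| <= m + #|F0|.
Proof.
move=> YSF0; rewrite -(cardsID [set v | isS v] Y) leq_add //.
  by rewrite -[X in _ <= X]card_isS subset_leq_card // subsetIr.
by apply: card_inF0 => v; rewrite !inE => /andP [/negbTE nS /YSF0]; rewrite nS.
Qed.

Hypothesis l_le_t : l <= t.

Lemma Gx_K_free :
  (if joinXS then m <= t else ~~ contains_K S l t) -> ~~ contains_K e l t.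
Proof.
move=> hS; apply/contains_KP => -[A [B [cA cB dAB eAB]]].
have cAB : #|A :|: B| = l + t by rewrite cardsU (disjoint_setI0 dAB) cards0 subn0 cA cB.
have [/exists_inP [v vAB Sv] | /exists_inPn noS] := boolP [exists v in A :|: B, isS v].
  have ltA : #|F0| < #|A| by rewrite cA.
  have ltB : #|F0| < #|B| by rewrite cB; exact: leq_trans F0_lt l_le_t.
  have SF := complete_pair_meeting_S eAB ltA ltB (ex_intro2 _ _ v vAB Sv).
  move: hS SF; case: ifP => _ hS SF; first by have := card_S_or_F0 SF; rewrite cAB; lia.
  have SK : contains_K S #|A| #|B|.
    apply: contains_K_pullback vS_inj _ _ dAB eAB => // w /SF.
    by rewrite orbF; exact: isS_codom.
  by move: SK; rewrite cA cB (negbTE hS).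
by have := complete_pair_avoiding_S eAB noS; rewrite cA cB; lia.
Qed.

End Construction.

Theorem lemma2p5 (l t s x n : nat)
  (X : rel 'I_x) (S : rel 'I_(2 * (s - x)).+1) (F0 : {set 'I_x}) :
  2 <= l -> l <= t -> l.+1 <= s -> (2 * s).+1 <= n -> l <= x -> x <= s ->
  x + (t - 1) * 'C(x, l) + (2 * (s - x)).+1 <= n ->
  simple_graph X -> ~~ contains_K X 1 l -> nedges X = exK x 1 l ->
  simple_graph S -> ~~ contains_K S l t -> nedges S = exK (2 * (s - x)).+1 l t ->
  #|F0| = l - 1 ->
  let u := n - x - (t - 1) * 'C(x, l) - (2 * (s - x)).+1 in
  ((2 * (s - x)).+1 <= t ->
     ~~ contains_K (Gx (u := u) (l := l) (t := t) X S F0 true) l t &&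
     ~~ contains_M (Gx (u := u) (l := l) (t := t) X S F0 true) s.+1) /\
  (t.+1 <= (2 * (s - x)).+1 ->
     ~~ contains_K (Gx (u := u) (l := l) (t := t) X S F0 false) l t &&
     ~~ contains_M (Gx (u := u) (l := l) (t := t) X S F0 false) s.+1).
Proof.
(* The extremality of X and S and the bounds involving n only make G_1^x and G_2^x
   extremal graphs on n vertices. *)
move=> l_ge2 l_le_t _ _ _ x_le_s _ simpleX X_K1_free _ simpleS S_K_free _ cardF0 u.
have [X_irr X_sym] := simple_graphP simpleX.
have [S_irr S_sym] := simple_graphP simpleS.
have F0_lt : #|F0| < l by rewrite cardF0; lia.
have M_free joinXS : ~~ contains_M (Gx (u := u) (l := l) (t := t) X S F0 joinXS) s.+1.
  by apply: (Gx_M_free l t u F0 joinXS X_irr S_irr); lia.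
by split=> m_t; rewrite M_free andbT;
  exact: Gx_K_free X_irr X_sym S_sym X_K1_free F0_lt l_le_t _.
Qed.
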